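(* Let $p$ be a prime and let $\tau:\mathbb Z_p\to \mathbb Z/p[\![x]\!]^\times$ be the continuous homomorphism from the additive group of $p$-adic integers sending $\alpha$ to $(1-x)^\alpha$ (so $1\mapsto 1-x$). Let $K$ be the subfield of the field of formal Laurent series $\mathbb Z/p(\!(x)\!)$ generated by the image of $\tau$. Then the degree $[\mathbb Z/p(\!(x)\!):K]$ is uncountable.
   Context: In the paper $\mathbb Z_p$ is written multiplicatively as $C\otimes\mathbb Z_p=\{t^\alpha:\alpha\in\mathbb Z_p\}$ with $C=\langle t\rangle$ infinite cyclic, and $\tau(t^\alpha)=(1-x)^\alpha$; the homomorphism is well defined and continuous because $(1-x)^{p^i}=1-x^{p^i}$ in characteristic $p$. *)

From HB Require Import structures.
From mathcomp Require Import all_boot all_order all_algebra.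
From mathcomp Require Import boolp zify.

Set Implicit Arguments.
Unset Strict Implicit.
Unset Printing Implicit Defensive.

Import GRing.Theory.
Local Open Scope ring_scope.

(* Formal power series R[[x]] over an integral domain R, with the Cauchy    *)
(* product; we equip it with an idomainType structure so that the field of  *)
(* formal Laurent series R((x)) can be taken as its fraction field.         *)
Section FPS.
Variable R : idomainType.

Record fps := FPS { coef : nat -> R }.

HB.instance Definition _ := gen_eqMixin fps.
HB.instance Definition _ := gen_choiceMixin fps.

Lemma fpsP (f g : fps) : (forall n, coef f n = coef g n) -> f = g.
Proof. by case: f => f; case: g => g /= h; congr FPS; apply: funext. Qed.

Definition fps0 := FPS (fun _ => 0).
Definition fps_opp f := FPS (fun n => - coef f n).
Definition fps_add f g := FPS (fun n => coef f n + coef g n).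

Lemma fps_addA : associative fps_add.
Proof. by move=> f g h; apply: fpsP => n /=; rewrite addrA. Qed.
Lemma fps_addC : commutative fps_add.
Proof. by move=> f g; apply: fpsP => n /=; rewrite addrC. Qed.
Lemma fps_add0 : left_id fps0 fps_add.
Proof. by move=> f; apply: fpsP => n /=; rewrite add0r. Qed.
Lemma fps_addN : left_inverse fps0 fps_opp fps_add.
Proof. by move=> f; apply: fpsP => n /=; rewrite addNr. Qed.

HB.instance Definition _ :=
  GRing.isZmodule.Build fps fps_addA fps_addC fps_add0 fps_addN.

Definition fps_mul f g :=
  FPS (fun n => \sum_(i < n.+1) coef f i * coef g (n - i)).
Definition fps1 := FPS (fun n => (n == 0)%:R).

Definition trunc n f : {poly R} := \poly_(i < n.+1) coef f i.

Lemma coef_trunc n f i : (i <= n)%N -> (trunc n f)`_i = coef f i.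
Proof. by move=> hi; rewrite /trunc coef_poly ltnS hi. Qed.

Lemma coefM_low n (p q p' q' : {poly R}) :
  (forall i, (i <= n)%N -> p`_i = p'`_i) ->
  (forall i, (i <= n)%N -> q`_i = q'`_i) ->
  (p * q)`_n = (p' * q')`_n.
Proof.
move=> hp hq; rewrite !coefM; apply: eq_bigr => i _.
rewrite hp; last by rewrite -ltnS.
by rewrite hq // leq_subr.
Qed.

Lemma coef_fps_mul n N f g : (n <= N)%N ->
  coef (fps_mul f g) n = (trunc N f * trunc N g)`_n.
Proof.
move=> hn; rewrite /= coefM; apply: eq_bigr => i _.
have hi : (i <= N)%N by rewrite (leq_trans _ hn) // -ltnS.
have hj : (n - i <= N)%N by rewrite (leq_trans (leq_subr _ _) hn).
by rewrite !coef_trunc.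
Qed.

Lemma trunc_mul n f g i : (i <= n)%N ->
  (trunc n (fps_mul f g))`_i = (trunc n f * trunc n g)`_i.
Proof. by move=> hi; rewrite coef_trunc // (coef_fps_mul _ _ hi). Qed.

Lemma fps_mulA : associative fps_mul.
Proof.
move=> f g h; apply: fpsP => n.
rewrite (coef_fps_mul _ _ (leqnn n)) (coef_fps_mul _ _ (leqnn n)).
rewrite (@coefM_low n _ _ (trunc n f) (trunc n g * trunc n h)) //;
  last by move=> i hi; rewrite trunc_mul.
rewrite mulrA; apply: coefM_low => // i hi.
by rewrite trunc_mul.
Qed.

Lemma fps_mulC : commutative fps_mul.
Proof.
move=> f g; apply: fpsP => n.
by rewrite !(coef_fps_mul _ _ (leqnn n)) mulrC.
Qed.

Lemma fps_mul1 : left_id fps1 fps_mul.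
Proof.
move=> f; apply: fpsP => n; rewrite (coef_fps_mul _ _ (leqnn n)).
rewrite (@coefM_low n _ _ 1 (trunc n f)) ?mul1r ?coef_trunc //.
by move=> i hi; rewrite coef_trunc // coef1.
Qed.

Lemma fps_mulDl : left_distributive fps_mul fps_add.
Proof.
move=> f g h; apply: fpsP => n /=; rewrite -big_split /=.
by apply: eq_bigr => i _; rewrite mulrDl.
Qed.

Lemma fps1_neq0 : fps1 != fps0.
Proof.
apply/eqP => /(congr1 (fun f => coef f 0)) /= /eqP.
by rewrite oner_eq0.
Qed.

HB.instance Definition _ :=
  GRing.Zmodule_isComNzRing.Build fps fps_mulA fps_mulC fps_mul1 fps_mulDl
    fps1_neq0.

Definition fps_unit : {pred fps} := fun x => `[< exists y : fps, y * x = 1 >].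
Definition fps_inv (x : fps) : fps :=
  match pselect (exists y : fps, y * x = 1) with
  | left h => projT1 (cid h)
  | right _ => x
  end.

Lemma fps_mulVx : {in fps_unit, left_inverse 1 fps_inv *%R}.
Proof.
move=> x /asboolP hx; rewrite /fps_inv; case: pselect => // h.
by case: (cid h).
Qed.

Lemma fps_unitPl (x y : fps) : y * x = 1 -> fps_unit x.
Proof. by move=> h; apply/asboolP; exists y. Qed.

Lemma fps_invr_out : {in [predC fps_unit], fps_inv =1 id}.
Proof.
move=> x /negP hx; rewrite /fps_inv; case: pselect => // h.
by exfalso; apply: hx; apply/asboolP.
Qed.

HB.instance Definition _ :=
  GRing.ComNzRing_hasMulInverse.Build fps fps_mulVx fps_unitPl fps_invr_out.

Lemma fps_nz_coef (x : fps) : x != 0 -> exists i, coef x i != 0.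
Proof.
move=> hx; case: (pselect (exists i, coef x i != 0)) => // h.
exfalso; move/eqP: hx; apply; apply: fpsP => n /=.
by apply/eqP; apply/negPn/negP => hn; apply: h; exists n.
Qed.

Lemma fps_coefM (x y : fps) n :
  coef (x * y) n = \sum_(i < n.+1) coef x i * coef y (n - i).
Proof. by []. Qed.

Lemma fps_integral : GRing.integral_domain_axiom fps.
Proof.
move=> x y hxy; apply/negPn/negP; rewrite negb_or => /andP[hx hy].
case: (ex_minnP (fps_nz_coef hx)) => i hi imin.
case: (ex_minnP (fps_nz_coef hy)) => j hj jmin.
have : coef (x * y) (i + j) != 0.
  rewrite fps_coefM.
  have hio : (i < (i + j).+1)%N by rewrite ltnS leq_addr.
  rewrite (bigD1 (Ordinal hio)) //= big1 ?addr0.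
    by rewrite addKn mulf_neq0.
  move=> k hk; have hk' : (nat_of_ord k != i) by [].
  case: (ltngtP k i) => hki.
  - have : coef x k == 0.
      by apply/negPn/negP => hn; move: (imin _ hn); rewrite leqNgt hki.
    by move/eqP ->; rewrite mul0r.
  - have : coef y (i + j - k) == 0.
      apply/negPn/negP => hn; move: (jmin _ hn).
      have := ltn_ord k; lia.
    by move/eqP ->; rewrite mulr0.
  - by move: hk'; rewrite hki eqxx.
by rewrite hxy => /eqP; apply.
Qed.

HB.instance Definition _ := GRing.ComUnitRing_isIntegral.Build fps fps_integral.

End FPS.

(* The field of formal Laurent series F((x)) over a field F, realised as the *)
(* fraction field of F[[x]] (indeed F((x)) = F[[x]][1/x] = Frac F[[x]]).     *)
Definition laurent (F : fieldType) : fieldType := {fraction (fps F)}.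

(* p-adic integers Z_p = lim Z/p^n, an element being a compatible family of *)
(* residues a n \in {0, ..., p^n - 1} with a (n+1) = a n  (mod p^n).        *)
Definition padic_int (p : nat) : Type :=
  { a : nat -> nat | forall n, (a n < p ^ n)%N /\ (a n.+1 %% p ^ n)%N = a n }.

(* tau(alpha) = (1 - x)^alpha in F_p[[x]]: the n-th coefficient is that of   *)
(* the polynomial (1 - x)^m for any natural m = alpha (mod p^(n+1)); this is *)
(* the continuous extension of m |-> (1 - x)^m, since                        *)
(* (1 - x)^(p^k) = 1 - x^(p^k) in characteristic p and p^(n+1) > n.         *)
Definition tau (p : nat) (alpha : padic_int p) : fps 'F_p :=
  FPS (fun n => ((1 - 'X : {poly 'F_p}) ^+ (sval alpha n.+1))`_n).

Definition is_subfield (L : fieldType) (E : L -> Prop) : Prop :=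
  [/\ E 1,
      (forall x y, E x -> E y -> E (x - y)),
      (forall x y, E x -> E y -> E (x * y)) &
      (forall x, E x -> x != 0 -> E x^-1)].

Definition subfield_gen (L : fieldType) (S : L -> Prop) : L -> Prop :=
  fun z => forall E : L -> Prop, is_subfield E -> (forall x, S x -> E x) -> E z.

Definition K_tau (p : nat) : laurent 'F_p -> Prop :=
  subfield_gen (fun z => exists alpha : padic_int p, z = FracField.tofrac (tau alpha)).

Definition spans_over (L : fieldType) (K : L -> Prop) (v : nat -> L) : Prop :=
  forall z : L, exists (n : nat) (c : nat -> L),
    (forall i, (i < n)%N -> K (c i)) /\ z = \sum_(i < n) c i * v i.

(** Modulo x^(p^m), the series (1 - x)^α depends only on α mod p^m, since
    (1 - x)^(p^m) = 1 - x^(p^m) in characteristic p.  So the series obtained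
    from values of τ by N ring operations have only p^O(m) residues modulo
    x^(p^m).  Clearing denominators, the same holds for the elements of bounded
    complexity in the K-span of v_0, ..., v_(n-1): a quotient T / S is
    determined modulo x^(L - V) by T and S modulo x^L as soon as S has a
    nonzero coefficient of index at most V.  Hence the K-span of the v_i is a
    countable union of sets having, for suitable L > M, fewer residues modulo
    x^L than there are ways to extend a prefix of length M; a diagonal argument
    then produces a power series outside all of them. *)

From HB Require Import structures.
From mathcomp Require Import all_boot all_order all_algebra boolp zify ring.

Set Implicit Arguments.
Unset Strict Implicit.
Unset Printing Implicit Defensive.

Import GRing.Theory.
Local Open Scope ring_scope.

Local Notation "x %:F" := (@FracField.tofrac _ x).

Lemma affine_lt_expn c D k : (1 < c)%N -> exists m, (m.+1 * D + k < c ^ m)%N.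
Proof.
move=> c_gt1; pose n := (2 * D + k + 3)%N; exists n.*2.
have n_lt : (n.+1 * n.+1 <= c ^ n * c ^ n)%N by apply: leq_mul; apply: ltn_expl.
rewrite -expnD addnn in n_lt; move: n_lt; rewrite /n; nia.
Qed.

Section Truncation.
Variable R : idomainType.
Implicit Types (f g d S T : fps R) (q : {poly R}).

Lemma fps_coefD f g n : coef (f + g) n = coef f n + coef g n. Proof. by []. Qed.
Lemma fps_coefB f g n : coef (f - g) n = coef f n - coef g n. Proof. by []. Qed.

Definition agree L f q := forall i, (i < L)%N -> coef f i = q`_i.

Definition covers L (l : seq {poly R}) (A : fps R -> Prop) :=
  forall f, A f -> exists2 q, q \in l & agree L f q.

Lemma agree1 L : agree L 1 1.
Proof. by move=> i _; rewrite coef1. Qed.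

Lemma agree_poly L f : agree L f (\poly_(i < L) coef f i).
Proof. by move=> i hi; rewrite coef_poly hi. Qed.

Lemma agreeD L f g q q' : agree L f q -> agree L g q' -> agree L (f + g) (q + q').
Proof. by move=> hf hg i hi; rewrite coefD -hf // -hg. Qed.

Lemma agreeB L f g q q' : agree L f q -> agree L g q' -> agree L (f - g) (q - q').
Proof. by move=> hf hg i hi; rewrite coefB -hf // -hg. Qed.

Lemma agreeM L f g q q' : agree L f q -> agree L g q' -> agree L (f * g) (q * q').
Proof.
move=> hf hg i hi; rewrite fps_coefM coefM; apply: eq_bigr => j _.
have hj : (j <= i)%N by rewrite -ltnS.
by rewrite hf ?hg //; [exact: leq_ltn_trans (leq_subr _ _) hi | exact: leq_ltn_trans hj hi].
Qed.

Lemma covers_fibres (X : eqType) L (A : fps R -> Prop) (fibre : fps R -> X -> Prop)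
    (l : seq X) :
  (forall f, A f -> exists2 x, x \in l & fibre f x) ->
  (forall f g x, fibre f x -> fibre g x ->
     forall i, (i < L)%N -> coef f i = coef g i) ->
  exists2 l' : seq {poly R}, (size l' <= size l)%N & covers L l' A.
Proof.
move=> A_fibre fibre_agree.
pose rep x : {poly R} := if pselect (exists f, fibre f x) is left h
  then \poly_(i < L) coef (projT1 (cid h)) i else 0.
exists (map rep l) => [|f Af]; first by rewrite size_map.
have [x xl fx] := A_fibre f Af; exists (rep x); first exact: map_f.
rewrite /rep; case: pselect => [h|[]]; last by exists f.
by case: (cid h) => g gx /= i hi; rewrite coef_poly hi; exact: fibre_agree fx gx _ hi.
Qed.

Lemma coef_eq0_of_mul d S L i0 :
  coef S i0 != 0 -> (forall k, (k < i0)%N -> coef S k = 0) ->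
  (forall k, (k < L)%N -> coef (d * S) k = 0) ->
  forall j, (j + i0 < L)%N -> coef d j = 0.
Proof.
move=> Si0 S_low dS0; elim/ltn_ind => j IH hj.
have := dS0 _ hj; rewrite fps_coefM.
have hjo : (j < (j + i0).+1)%N by rewrite ltnS leq_addr.
rewrite (bigD1 (Ordinal hjo)) //= big1 ?addr0 => [|k hkj].
  by rewrite addKn => /eqP; rewrite mulf_eq0 (negbTE Si0) orbF => /eqP.
case: (ltngtP k j) => hkj'.
- by rewrite IH ?mul0r //; lia.
- by rewrite S_low ?mulr0 //; have := ltn_ord k; lia.
- by move: hkj; rewrite -(inj_eq val_inj) /= hkj' eqxx.
Qed.

Lemma quotient_agree f g S S' T T' L V :
  f * S = T -> g * S' = T' -> (exists2 i, (i <= V)%N & coef S i != 0) ->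
  (forall k, (k < L)%N -> coef S k = coef S' k) ->
  (forall k, (k < L)%N -> coef T k = coef T' k) ->
  forall j, (j < L - V)%N -> coef f j = coef g j.
Proof.
move=> fST gST' [i iV Si] SS' TT' j hj.
have [i0 Si0 i0_min] := ex_minnP (ex_intro (fun k => coef S k != 0) i Si).
have S_low k : (k < i0)%N -> coef S k = 0.
  by move=> hk; apply/eqP; apply: contraTT hk => /i0_min; rewrite -leqNgt.
have dS0 k : (k < L)%N -> coef ((f - g) * S) k = 0.
  move=> hk; have -> : (f - g) * S = T - T' + g * (S' - S) by rewrite -fST -gST'; ring.
  rewrite fps_coefD fps_coefB TT' // subrr add0r fps_coefM; apply: big1 => l _.
  by rewrite fps_coefB SS' ?subrr ?mulr0 //; exact: leq_ltn_trans (leq_subr _ _) hk.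
have ji0 : (j + i0 < L)%N by have := i0_min _ Si; lia.
by have /eqP := coef_eq0_of_mul Si0 S_low dS0 ji0; rewrite fps_coefB subr_eq0 => /eqP.
Qed.

Lemma fps_limit (L : nat -> nat) (y : nat -> nat -> R) :
  (forall j, (L j < L j.+1)%N) -> (forall j i, (i < L j)%N -> y j.+1 i = y j i) ->
  exists w : fps R, forall j i, (i < L j)%N -> coef w i = y j i.
Proof.
move=> L_incr y_ext.
have L_mono : {homo L : j k / (j <= k)%N} by apply: homo_leq => // [? ? ?|?];
  [exact: leq_trans | exact: ltnW].
have y_stable j k i : (j <= k)%N -> (i < L j)%N -> y k i = y j i.
  move=> /subnK <- hi; elim: (k - j)%N => // d IH; rewrite addSn y_ext //.
  exact: leq_trans hi (L_mono _ _ (leq_addl _ _)).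
have L_ge j : (j <= L j)%N by elim: j => // j IH; exact: leq_ltn_trans IH (L_incr j).
exists (FPS (fun i => y i.+1 i)) => j i hi /=.
rewrite -(y_stable i.+1 (maxn j i.+1)) ?leq_maxr ?(y_stable j) ?leq_maxl //.
Qed.

End Truncation.

Section Fractions.
Variable R : idomainType.

Lemma fraction_quotient (x : {fraction R}) :
  exists ab : R * R, ab.2 != 0 /\ x = ab.1%:F / ab.2%:F.
Proof.
elim/quotW: x => r; exists (\n_r, \d_r); split; first exact: denom_ratioP.
apply: (@mulIf _ (\d_r)%:F); first by rewrite tofrac_eq0 denom_ratioP.
rewrite /= divfK ?tofrac_eq0 ?denom_ratioP //.
unlock FracField.tofrac; rewrite /GRing.mul /= !piE; apply/eqmodP.
rewrite /= FracField.equivfE /FracField.mulf.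
by rewrite !numden_Ratio ?(oner_eq0, mulf_neq0, denom_ratioP) // !mulr1 mulrC.
Qed.

Lemma clear_denominators n (r a b : nat -> R) s w :
  s != 0 -> (forall i, b i != 0) ->
  w%:F = \sum_(i < n) (r i)%:F / s%:F * ((a i)%:F / (b i)%:F) ->
  w * (s * \prod_(j < n) b j) =
    \sum_(i < n) r i * (a i * \prod_(j < n | j != i :> nat) b j).
Proof.
move=> s0 b0 hw; apply/eqP; rewrite -tofrac_eq tofracM hw rmorph_sum mulr_suml.
apply/eqP/eq_bigr => i _; rewrite (bigD1 i) //= !tofracM.
have sF : s%:F != 0 by rewrite tofrac_eq0.
have bF : (b i)%:F != 0 by rewrite tofrac_eq0.
by rewrite mulrACA (divfK sF) (mulrA (_ / _)) (divfK bF).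
Qed.
End Fractions.

Section Counting.
Variable F : finFieldType.
Implicit Types (A B : fps F -> Prop) (f g : fps F).

Local Notation card_gt1 := (card_finNzRing_gt1 F).

Definition thin D A := forall m, exists2 l : seq {poly F},
  (size l <= #|F| ^ (m.+1 * D))%N & covers (#|F| ^ m) l A.

Lemma thin_sub D A B : thin D A -> (forall f, B f -> A f) -> thin D B.
Proof. by move=> thA BA m; have [l szl covl] := thA m; exists l => // f /BA/covl. Qed.

Lemma thin_add DA DB A B : thin DA A -> thin DB B ->
  thin (DA + DB) (fun f => exists g h, [/\ A g, B h & f = g + h]).
Proof.
move=> thA thB m; have [lA szA covA] := thA m; have [lB szB covB] := thB m.
exists [seq x + y | x <- lA, y <- lB].
  by rewrite size_allpairs mulnDr expnD leq_mul.
move=> _ [g [h [Ag Bh ->]]]; have [x xl gx] := covA g Ag; have [y yl hy] := covB h Bh.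
by exists (x + y); [exact: allpairs_f | exact: agreeD].
Qed.

Lemma thin_mulr D A c : thin D A -> thin D (fun f => exists2 g, A g & f = g * c).
Proof.
move=> thA m; have [l szl covl] := thA m.
exists [seq x * \poly_(i < #|F| ^ m) coef c i | x <- l]; first by rewrite size_map.
move=> _ [g Ag ->]; have [x xl gx] := covl g Ag.
by exists (x * \poly_(i < #|F| ^ m) coef c i); [exact: map_f | exact/agreeM/agree_poly].
Qed.

Definition lincomb A (e : nat -> fps F) n T :=
  exists2 r : nat -> fps F, (forall i, (i < n)%N -> A (r i)) & T = \sum_(i < n) r i * e i.

Lemma thin_lincomb D A e n : thin D A -> thin (n * D) (lincomb A e n).
Proof.
move=> thA; elim: n => [|n IH].
  move=> m; exists [:: 0]; first by rewrite mul0n muln0 expn0.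
  by move=> _ [r _ ->]; exists 0; rewrite ?mem_seq1 ?big_ord0 // => i _; rewrite coef0.
rewrite mulSnr; apply: thin_sub (thin_add IH (thin_mulr (e n) thA)) _ => _ [r Ar ->].
exists (\sum_(i < n) r i * e i), (r n * e n); split; last by rewrite big_ord_recr.
- by exists r => // i /ltnW/Ar.
- by exists (r n); first exact: Ar.
Qed.

Definition ring_step A f :=
  A f \/ exists g h, [/\ A g, A h & f = g - h \/ f = g * h].

Lemma iter_ring_step_le A N N' f :
  (N <= N')%N -> iter N ring_step A f -> iter N' ring_step A f.
Proof.
by move=> /subnK <-; rewrite iterD; elim: (N' - N)%N => // k IH /IH; left.
Qed.

Lemma thin_ring_step D A : thin D A -> thin (2 * D + 2) (ring_step A).
Proof.
move=> thA m; have [l szl covl] := thA m.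
exists (l ++ [seq x - y | x <- l, y <- l] ++ [seq x * y | x <- l, y <- l]).
  rewrite !size_cat !size_allpairs.
  have -> : (#|F| ^ (m.+1 * (2 * D + 2)) =
             #|F| ^ (m.+1 * D) * #|F| ^ (m.+1 * D) * #|F| ^ (2 * m.+1))%N.
    by rewrite -!expnD; congr expn; lia.
  have P_gt0 : (0 < #|F| ^ (m.+1 * D))%N by rewrite expn_gt0 (ltnW card_gt1).
  have X_ge4 : (4 <= #|F| ^ (2 * m.+1))%N.
    apply: (@leq_trans (#|F| ^ 2)); last by apply: leq_pexp2l; [exact: ltnW card_gt1 | lia].
    by rewrite expnS expn1; exact: leq_mul card_gt1 card_gt1.
  move: szl P_gt0 X_ge4.
  by move: (size l) (#|F| ^ (m.+1 * D))%N (#|F| ^ (2 * m.+1))%N => s P X; nia.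
move=> f [/covl [q ql fq] | [g [h [Ag Ah fgh]]]].
  by exists q; rewrite ?mem_cat ?ql.
have [x xl gx] := covl g Ag; have [y yl hy] := covl h Ah.
case: fgh => ->.
- by exists (x - y); [rewrite !mem_cat (allpairs_f (fun x y => x - y)) ?orbT | exact: agreeB].
- by exists (x * y); [rewrite !mem_cat (allpairs_f (fun x y => x * y)) ?orbT | exact: agreeM].
Qed.

Lemma thin_iter_ring_step D A N : thin D A ->
  thin (iter N (fun D => 2 * D + 2)%N D) (iter N ring_step A).
Proof. by move=> thA; elim: N => //= N IH; apply: thin_ring_step. Qed.

Definition small A := forall M, exists2 L, (M < L)%N &
  exists2 l : seq {poly F}, (size l < #|F| ^ (L - M))%N & covers L l A.

Lemma small_extend A : small A -> forall Mx : nat * (nat -> F),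
  exists Ly : nat * (nat -> F), [/\ (Mx.1 < Ly.1)%N,
    forall i, (i < Mx.1)%N -> Ly.2 i = Mx.2 i &
    forall f, A f -> ~ (forall i, (i < Ly.1)%N -> coef f i = Ly.2 i)].
Proof.
move=> smA [M x] /=; have [L ML [l szl covl]] := smA M.
pose tail (q : {poly F}) := [tuple q`_(M + k) | k < L - M].
have [t tNl] : exists t : (L - M).-tuple F, t \notin map tail l.
  case: (pickP (fun t : (L - M).-tuple F => t \notin map tail l)) => [t|all_in].
    by exists t.
  suff : (#|{: (L - M).-tuple F}| <= size (map tail l))%N.
    by rewrite card_tuple size_map leqNgt szl.
  apply: leq_trans (card_size _); apply: subset_leq_card; apply/subsetP => t _.
  by move/negbFE: (all_in t).
exists (L, fun i => if (i < M)%N then x i else nth 0 t (i - M)).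
split => //= [i ->// | f Af f_ext].
have [q ql fq] := covl f Af; case/negP: tNl; apply/mapP; exists q => //.
apply: eq_from_tnth => k; have Mk_lt : (M + k < L)%N by have := ltn_ord k; lia.
by rewrite tnth_mktuple (tnth_nth 0) -fq // f_ext // ltnNge leq_addr addKn.
Qed.

Lemma avoid_small (I : countType) (S : I -> fps F -> Prop) :
  (forall i, small (S i)) -> exists w, forall i, ~ S i w.
Proof.
move=> smS; pose S' j := if unpickle j is Some i then S i else fun _ => False.
have smS' j : small (S' j).
  rewrite /S'; case: unpickle => [i|M]; first exact: smS.
  by exists M.+1 => //; exists [::] => [|f []]; rewrite expn_gt0 (ltnW card_gt1).
have [g hg] := choice (fun jx : nat * (nat * (nat -> F)) => small_extend (smS' jx.1) jx.2).
pose st := fix st j := if j is j'.+1 then g (j', st j') else (0%N, fun _ : nat => 0 : F).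
have [w hw] : exists w : fps F, forall j i, (i < (st j).1)%N -> coef w i = (st j).2 i.
  apply: fps_limit => [j | j i hi]; first by case: (hg (j, st j)).
  by case: (hg (j, st j)) => _ ->.
exists w => i Siw; have [_ _ fresh] := hg (pickle i, st (pickle i)).
by apply: (fresh w); [rewrite /S' pickleK | exact: (hw (pickle i).+1)].
Qed.

Definition quotients A B V w := exists T S,
  [/\ A T, B S, exists2 i, (i <= V)%N & coef S i != 0 & w * S = T].

Lemma small_quotients DA DB A B V : thin DA A -> thin DB B -> small (quotients A B V).
Proof.
move=> thA thB M.
have [m hm] : exists m, (m.+1 * (DA + DB) + (V + M) < #|F| ^ m)%N.
  exact: affine_lt_expn card_gt1.
have [lA szA covA] := thA m; have [lB szB covB] := thB m.
pose fibre w (xy : {poly F} * {poly F}) := exists T S,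
  [/\ A T /\ B S, exists2 i, (i <= V)%N & coef S i != 0, w * S = T,
      agree (#|F| ^ m) T xy.1 & agree (#|F| ^ m) S xy.2].
have [l szl covl] : exists2 l : seq {poly F},
    (size l <= size [seq (x, y) | x <- lA, y <- lB])%N &
    covers (#|F| ^ m - V) l (quotients A B V).
  apply: (@covers_fibres _ _ _ _ fibre).
    move=> w [T [S [AT BS nzS wST]]].
    have [x xl Tx] := covA T AT; have [y yl Sy] := covB S BS.
    by exists (x, y); [exact: allpairs_f | exists T, S].
  move=> w w' xy [T [S [_ nzS wST Tx Sy]]] [T' [S' [_ _ wST' Tx' Sy']]].
  by apply: quotient_agree wST wST' nzS _ _ => k hk;
    [rewrite Sy // Sy' | rewrite Tx // Tx'].
exists (#|F| ^ m - V)%N; first lia.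
exists l => //; apply: leq_ltn_trans szl _; rewrite size_allpairs.
apply: leq_ltn_trans (leq_mul szA szB) _.
rewrite -expnD -mulnDr ltn_exp2l; [lia | exact: card_gt1].
Qed.

End Counting.

Section OneSubXPowers.
Variables (R : comNzRingType) (p : nat).
Hypothesis pchar_p : p \in [pchar R].

Lemma one_subX_exp_pchar j : (1 - 'X : {poly R}) ^+ (p ^ j) = 1 - 'X^(p ^ j).
Proof.
have pchar_poly_p : p \in [pchar {poly R}] by rewrite pchar_poly.
elim: j => [|j IH]; first by rewrite expn0 !expr1.
rewrite expnSr exprM IH -(pFrobenius_autE pchar_poly_p).
rewrite pFrobenius_autB_comm; last exact: mulrC.
by rewrite !pFrobenius_autE expr1n -exprM.
Qed.

Lemma coefM_exp_one_subXn (q : {poly R}) P t n : (n < P)%N ->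
  (q * (1 - 'X^P) ^+ t)`_n = q`_n.
Proof.
move=> hn; elim: t q => [|t IH] q; first by rewrite expr0 mulr1.
by rewrite exprS mulrA IH mulrBr mulr1 coefB coefMXn hn subr0.
Qed.

Lemma coef_one_subX_exp_mod j c c' n : (n < p ^ j)%N -> c = c' %[mod p ^ j] ->
  ((1 - 'X : {poly R}) ^+ c)`_n = ((1 - 'X) ^+ c')`_n.
Proof.
move=> hn; wlog le_cc' : c c' / (c <= c')%N.
  by move=> H; case: (leqP c c') => [|/ltnW] le e; [exact: H | symmetry; exact: H].
move=> /eqP; rewrite eq_sym eqn_mod_dvd // => /dvdnP [t ht].
have -> : c' = (c + t * p ^ j)%N by rewrite -ht subnKC.
by rewrite exprD mulnC exprM one_subX_exp_pchar coefM_exp_one_subXn.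
Qed.

End OneSubXPowers.

Lemma padic_int_mod p (alpha : padic_int p) i k : (i <= k)%N ->
  (sval alpha k %% p ^ i = sval alpha i)%N.
Proof.
case: alpha => a ha /=; move=> /subnK <-; elim: (k - i)%N => [|d IH].
  by rewrite add0n modn_small //; case: (ha i).
rewrite addSn -(modn_dvdm _ (dvdn_exp2l p (leq_addl d i))).
by have [_ ->] := ha (d + i)%N.
Qed.

Section TauRing.
Variable p : nat.
Hypothesis p_prime : prime p.
Local Notation F := 'F_p.
Implicit Types (f g : fps F) (z : laurent F).

Lemma tau_agree (alpha : padic_int p) m :
  agree (p ^ m) (tau alpha) ((1 - 'X) ^+ sval alpha m).
Proof.
move=> n hn /=; apply: (@coef_one_subX_exp_mod _ p _ (minn n.+1 m)).
- exact: pchar_Fp.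
- rewrite /minn; case: (ltnP n.+1 m) => // _.
  exact: ltnW (ltn_expl _ (prime_gt1 p_prime)).
- by rewrite !padic_int_mod ?geq_minl ?geq_minr.
Qed.

Definition tau_gen0 f := f = 1 \/ exists alpha : padic_int p, f = tau alpha.
Definition tau_gen N := iter N (@ring_step F) tau_gen0.
Definition tau_ring f := exists N, tau_gen N f.
Definition tau_frac z := exists r s, [/\ tau_ring r, tau_ring s, s != 0 & z = r%:F / s%:F].

Lemma thin_tau_gen0 : thin 2 tau_gen0.
Proof.
rewrite /thin card_Fp // => m.
exists (1 :: [seq (1 - 'X) ^+ k | k <- iota 0 (p ^ m)]).
  by rewrite /= size_map size_iota ltn_exp2l ?prime_gt1 //; lia.
move=> f [-> | [alpha ->]]; first by exists 1; [rewrite mem_head | exact: agree1].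
exists ((1 - 'X) ^+ sval alpha m); last exact: tau_agree.
by rewrite inE map_f ?orbT // mem_iota add0n; case: (svalP alpha m).
Qed.

Lemma thin_tau_gen N : thin (iter N (fun D => 2 * D + 2)%N 2) (tau_gen N).
Proof. exact: thin_iter_ring_step thin_tau_gen0. Qed.

Lemma tau_ring1 : tau_ring 1.
Proof. by exists 0%N; left. Qed.

Lemma tau_ring_tau alpha : tau_ring (tau alpha).
Proof. by exists 0%N; right; exists alpha. Qed.

Lemma tau_ring_op g h : tau_ring g -> tau_ring h ->
  tau_ring (g - h) /\ tau_ring (g * h).
Proof.
move=> [N gN] [N' hN']; pose M := maxn N N'.
have gM : tau_gen M g by apply: iter_ring_step_le gN; exact: leq_maxl.
have hM : tau_gen M h by apply: iter_ring_step_le hN'; exact: leq_maxr.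
by split; exists M.+1; right; exists g, h; split => //; [left | right].
Qed.

Lemma tau_ringB g h : tau_ring g -> tau_ring h -> tau_ring (g - h).
Proof. by move=> Rg Rh; case: (tau_ring_op Rg Rh). Qed.

Lemma tau_ringM g h : tau_ring g -> tau_ring h -> tau_ring (g * h).
Proof. by move=> Rg Rh; case: (tau_ring_op Rg Rh). Qed.

Lemma tau_ring_gen n (r : nat -> fps F) :
  (forall i, (i < n)%N -> tau_ring (r i)) -> exists N, forall i, (i < n)%N -> tau_gen N (r i).
Proof.
elim: n => [|n IH] Rr; first by exists 0%N.
have [N rN] := IH (fun i hi => Rr i (ltnW hi)); have [N' rnN'] := Rr n (ltnSn n).
exists (maxn N N') => i; rewrite ltnS leq_eqVlt => /predU1P [-> | hi].
- exact: iter_ring_step_le (leq_maxr _ _) rnN'.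
- exact: iter_ring_step_le (leq_maxl _ _) (rN i hi).
Qed.

Lemma tau_frac_subfield : is_subfield tau_frac.
Proof.
split.
- by exists 1, 1; rewrite tofrac1 divr1 oner_neq0; split => //; exact: tau_ring1.
- move=> _ _ [r [s [Rr Rs s0 ->]]] [r' [s' [Rr' Rs' s'0 ->]]].
  exists (r * s' - r' * s), (s * s'); split.
  + by apply: tau_ringB; apply: tau_ringM.
  + exact: tau_ringM.
  + by rewrite mulf_neq0.
  + by rewrite -mulNr addf_div ?tofrac_eq0 // tofracB !tofracM mulNr.
- move=> _ _ [r [s [Rr Rs s0 ->]]] [r' [s' [Rr' Rs' s'0 ->]]].
  exists (r * r'), (s * s'); split; try exact: tau_ringM.
  + by rewrite mulf_neq0.
  + by rewrite mulf_div !tofracM.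
- move=> _ [r [s [Rr Rs s0 ->]]] z0.
  have r0 : r != 0 by apply: contraNneq z0 => ->; rewrite tofrac0 mul0r.
  by exists s, r; split; rewrite // invf_div.
Qed.

Lemma K_tau_frac z : @K_tau p z -> tau_frac z.
Proof.
apply; first exact: tau_frac_subfield.
move=> _ [alpha ->]; exists (tau alpha), 1.
by rewrite tofrac1 divr1 oner_neq0; split => //; [exact: tau_ring_tau | exact: tau_ring1].
Qed.

Lemma tau_frac_common_denominator n (c : nat -> laurent F) :
  (forall i, (i < n)%N -> tau_frac (c i)) ->
  exists r s, [/\ tau_ring s, s != 0, forall i, (i < n)%N -> tau_ring (r i) &
    forall i, (i < n)%N -> c i = (r i)%:F / s%:F].
Proof.
elim: n => [|n IH] Kc.
  by exists (fun _ => 0), 1; split => //; [exact: tau_ring1 | exact: oner_neq0].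
have [r [s [Rs s0 Rr cr]]] := IH (fun i hi => Kc i (ltnW hi)).
have [r' [s' [Rr' Rs' s'0 cn]]] := Kc n (ltnSn n).
exists (fun i => if (i < n)%N then r i * s' else r' * s), (s * s'); split.
- exact: tau_ringM.
- by rewrite mulf_neq0.
- move=> i; rewrite ltnS leq_eqVlt => /predU1P [-> | hi]; rewrite ?ltnn ?hi.
    by apply: tau_ringM.
  by apply: tau_ringM => //; apply: Rr.
- move=> i; rewrite ltnS leq_eqVlt => /predU1P [-> | hi]; rewrite ?ltnn ?hi.
    by rewrite cn !tofracM [_ * s'%:F]mulrC -mulf_div divff ?mulr1 ?tofrac_eq0.
  by rewrite cr // !tofracM -mulf_div divff ?mulr1 ?tofrac_eq0.
Qed.

End TauRing.

Section TauSpan.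
Variables (p : nat) (a b : nat -> fps 'F_p).
Hypothesis p_prime : prime p.

Definition tau_span_set n N V := quotients
  (lincomb (@tau_gen p N) (fun i => a i * \prod_(j < n | j != i :> nat) b j) n)
  (fun S => exists2 s, @tau_gen p N s & S = s * \prod_(j < n) b j) V.

Lemma small_tau_span_set n N V : small (tau_span_set n N V).
Proof.
exact: small_quotients (thin_lincomb _ _ (thin_tau_gen p_prime N))
                       (thin_mulr _ (thin_tau_gen p_prime N)).
Qed.

Lemma tau_span_cover n c w : (forall i, b i != 0) ->
  (forall i, (i < n)%N -> @K_tau p (c i)) ->
  w%:F = \sum_(i < n) c i * ((a i)%:F / (b i)%:F) -> exists N V, tau_span_set n N V w.
Proof.
move=> b0 Kc w_sum.
have [r [s [Rs s0 Rr cr]]] :=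
  tau_frac_common_denominator (fun i hi => K_tau_frac (Kc i hi)).
have [N1 rN1] := tau_ring_gen Rr; have [N2 sN2] := Rs.
have sB0 : s * \prod_(j < n) b j != 0.
  by rewrite mulf_neq0 //; apply/prodf_neq0 => j _; apply: b0.
have [V nzV] := fps_nz_coef sB0.
exists (maxn N1 N2), V, (\sum_(i < n) r i * (a i * \prod_(j < n | j != i :> nat) b j)).
exists (s * \prod_(j < n) b j); split.
- by exists r => // i /rN1; apply: iter_ring_step_le; exact: leq_maxl.
- by exists s => //; apply: iter_ring_step_le sN2; exact: leq_maxr.
- by exists V.
- by apply: clear_denominators => //; rewrite w_sum; apply: eq_bigr => i _; rewrite cr.
Qed.

End TauSpan.

Theorem lemma3p2 (p : nat) (hp : prime p) (v : nat -> laurent 'F_p) :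
  ~ spans_over (@K_tau p) v.
Proof.
move=> span.
have [ab hab] := choice (fun i => fraction_quotient (v i)).
pose a i := (ab i).1; pose b i := (ab i).2.
have b0 i : b i != 0 by case: (hab i).
have [w w_out] := avoid_small (fun nNV : nat * nat * nat =>
  small_tau_span_set a b hp nNV.1.1 nNV.1.2 nNV.2).
have [n [c [Kc w_sum]]] := span w%:F.
have [N [V w_in]] : exists N V, tau_span_set a b n N V w.
  apply: tau_span_cover b0 Kc _; rewrite w_sum.
  by apply: eq_bigr => i _; case: (hab i) => _ ->.
exact: (w_out (n, N, V)).
Qed.
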